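(* In the contention game with $k=2$ channels under acknowledgement-based feedback and $2\le n\le4$ players, let all players other than $i$ use $f^2$, and let player $i$ use any protocol $r_i\notin\mathcal G^{f^2}$. Then the expected latency of player $i$ under the profile $(f^2_{-i},r_i)$ is at least $2^n/n$.
   Context: Contention game: $n$ players, channels $K=\{1,\dots,k\}$, slots $t=1,2,\dots$; each player has one packet, initially pending; in each slot a pending player chooses (possibly randomly) an action in $\{0,1,\dots,k\}$ ($0$ = idle, $a$ = transmit on channel $a$); a lone transmitter on a channel succeeds and leaves, colliding transmitters remain pending. Latency = slot of successful transmission. Acknowledgement-based: decision rules depend only on the personal action history; only transmitters learn whether they succeeded. $f^2$ is the protocol that in every slot, regardless of history, transmits on each of the two channels with probability $1/2$ and never idles. For $\tau^*\ge1$ and a personal history $h_{i,\tau^*}=(a_{i,1},\dots,a_{i,\tau^*})$, $g_i(h_{i,\tau^*})$ is the protocol playing $a_{i,t}$ with probability $1$ for $1\le t\le\tau^*$ and following $f^2$ for $t>\tau^*$. $\mathcal G^{f^2}$ is the set of all such $g_i(h_{i,\tau^*})$, over all $\tau^*\ge1$, for which $h_{i,\tau^*}$ occurs with positive probability when all players use $f^2$. *)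

From HB Require Import structures.
From mathcomp Require Import all_boot all_order all_algebra.
From mathcomp Require Import all_classical all_reals all_analysis.
Set Implicit Arguments. Unset Strict Implicit. Unset Printing Implicit Defensive.
Import Order.TTheory GRing.Theory Num.Theory.
Local Open Scope ring_scope.

(* Contention game with k = 2 channels, n players, acknowledgement-based
   feedback.  Actions: 'I_3, where 0 = idle, 1 / 2 = transmit on channel 1 / 2. *)

Definition action := 'I_3.
(* personal action history (a_1, ..., a_t), chronological order *)
Definition history := seq action.

Section Game.
Variable R : realType.

(* A (behavioural) protocol: maps the personal action history of a pending
   player to a distribution over the actions of the next slot. *)
Definition protocol := history -> {ffun action -> R}.

Definition is_protocol (p : protocol) : Prop :=
  forall s, (forall a, 0 <= p s a) /\ \sum_a p s a = 1.

Definition f2 : protocol :=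
  fun _ => [ffun a : action => if a == ord0 then 0 else 2%:R^-1].

Variable n : nat.

Definition aprofile := {ffun 'I_n -> action}.
(* game state: set of pending players and personal histories *)
Definition gstate := ({set 'I_n} * ('I_n -> history))%type.

Definition init_state : gstate := ([set: 'I_n]%SET, fun _ => [::]).

Definition succeeds (P : {set 'I_n}) (a : aprofile) (j : 'I_n) : bool :=
  [&& j \in P, a j != ord0 & [forall l in P, (l != j) ==> (a l != a j)]].

Definition step (st : gstate) (a : aprofile) : gstate :=
  (st.1 :\: [set j | succeeds st.1 a j],
   fun j => if j \in st.1 then rcons (st.2 j) (a j) else st.2 j).

(* probability that the action profile a is played in state st
   (players who have left are recorded as idle) *)
Definition weight (prots : 'I_n -> protocol) (st : gstate) (a : aprofile) : R :=
  \prod_j (if j \in st.1 then prots j (st.2 j) (a j) else (a j == ord0)%:R).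

Fixpoint run (prots : 'I_n -> protocol) (st : gstate) (w : R)
    (tr : seq aprofile) : gstate * R :=
  match tr with
  | [::] => (st, w)
  | a :: tr' => run prots (step st a) (w * weight prots st a) tr'
  end.

(* probability that player i succeeds exactly at slot t (t >= 1),
   i.e. that its latency equals t *)
Definition plat (prots : 'I_n -> protocol) (i : 'I_n) (t : nat) : R :=
  \sum_(tr : (t.-1).-tuple aprofile) \sum_(a : aprofile)
    let sw := run prots init_state 1 tr in
    sw.2 * weight prots sw.1 a * (succeeds sw.1.1 a i)%:R.

(* expected latency of player i (in the extended reals; +oo if with positive
   probability player i never succeeds) *)
Definition exp_latency (prots : 'I_n -> protocol) (i : 'I_n) : \bar R :=
  (\sum_(1 <= t <oo) ((t%:R * plat prots i t)%:E) +
   (if (\sum_(1 <= t <oo) (plat prots i t)%:E < 1)%E then +oo else 0))%E.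

Definition hist_prob (prots : 'I_n -> protocol) (i : 'I_n) (h : history) : R :=
  \sum_(tr : (size h).-tuple aprofile)
    let sw := run prots init_state 1 tr in
    sw.2 * (sw.1.2 i == h)%:R.

Definition g_dev (h : history) : protocol :=
  fun s => if (size s < size h)%N
           then [ffun a : action => (a == nth ord0 h (size s))%:R]
           else f2 s.

Definition in_G (i : 'I_n) (r : protocol) : Prop :=
  exists h : history,
    (1 <= size h)%N /\ 0 < hist_prob (fun _ => f2) i h /\ r = g_dev h.

End Game.

From HB Require Import structures.
From mathcomp Require Import all_boot all_order all_algebra.
From mathcomp Require Import all_classical all_reals all_analysis.
From mathcomp Require Import ring lra.
Set Implicit Arguments.
Unset Strict Implicit.
Unset Printing Implicit Defensive.
Import Order.TTheory GRing.Theory Num.Theory.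
Local Open Scope ring_scope.

(* Let V k = 2^k / k for k >= 2 and V 1 = 1: this is the expected latency of a player
   when k <= 4 players are pending and all use f^2.  Against f^2 opponents V satisfies
   the Bellman inequality  V |P| <= 1 + E[V |P'| ; i still pending]  whatever player i
   does in the slot, as long as |P| <= 4: the numbers of opponents on each channel are
   binomial, and the inequality is checked case by case.  Summing it along the play,
   V n <= sum_(t <= T) t P(latency = t) + E[T + V |P_T| ; latency > T]
       <= sum_(t <= T) t P(latency = t) + (T + 4) P(latency > T),
   and letting T -> oo gives E[latency] >= V n. *)

Section ProductSums.
Variables (R : comPzSemiRingType) (I A : finType).
Implicit Types (w : I -> A -> R) (G : {ffun I -> A} -> R).

Definition dirac (y : A) : A -> R := fun z => (z == y)%:R.

Definition set_factor w (l : I) (y : A) : I -> A -> R :=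
  fun j => if j == l then dirac y else w j.

Lemma sum_prod_factor w l G :
  \sum_(a : {ffun I -> A}) (\prod_j w j (a j)) * G a =
  \sum_y w l y * \sum_(a : {ffun I -> A}) (\prod_j set_factor w l y j (a j)) * G a.
Proof.
under [RHS]eq_bigr do rewrite big_distrr /=.
rewrite exchange_big /=; apply: eq_bigr => a _.
rewrite [RHS](bigD1 (a l)) //= [X in _ + X]big1 ?addr0 => [|y /negbTE ya].
  rewrite (bigD1 l) //= [in RHS](bigD1 l) //= /set_factor eqxx /dirac eqxx mul1r.
  by rewrite mulrA; congr (_ * _ * _); apply: eq_bigr => j /negbTE ->.
by rewrite (bigD1 l) //= /set_factor eqxx /dirac eq_sym ya !mul0r mulr0.
Qed.

Lemma sum_prod_dirac (b : I -> A) G :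
  \sum_(a : {ffun I -> A}) (\prod_j dirac (b j) (a j)) * G a = G [ffun j => b j].
Proof.
rewrite (bigD1 [ffun j => b j]) //= [X in _ + X]big1 ?addr0 => [|a ab].
  by rewrite big1 ?mul1r // => j _; rewrite ffunE /dirac eqxx.
have [j ajb] : exists j, a j != b j.
  apply/existsP; apply: contraR ab; rewrite negb_exists => /forallP ab.
  by apply/eqP/ffunP => j; rewrite ffunE; apply/eqP/negPn.
by rewrite (bigD1 j) //= /dirac (negbTE ajb) !mul0r.
Qed.

End ProductSums.

Definition chan1 : action := @Ordinal 3 1 isT.
Definition chan2 : action := @Ordinal 3 2 isT.

Lemma transmitP (y : action) : y != ord0 -> y = chan1 \/ y = chan2.
Proof. by case: y => [[|[|[|m]]] hm] // _; [left|right]; apply: val_inj. Qed.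

Lemma sum_action (V : nmodType) (F : action -> V) :
  \sum_(y : action) F y = F ord0 + F chan1 + F chan2.
Proof.
rewrite !big_ord_recl big_ord0 addr0 addrA.
by congr (F _ + F _ + F _); apply: val_inj.
Qed.

Lemma is_protocol_f2 (R : realType) : is_protocol (f2 R).
Proof.
move=> s; split=> [y|]; first by rewrite ffunE; case: ifP; rewrite ?invr_ge0.
by rewrite sum_action !ffunE /= add0r; lra.
Qed.

Section Binomial.
Variables (R : realType) (n : nat).

Definition load (O : {set 'I_n}) (a : aprofile n) (y : action) : nat :=
  \sum_(l in O) (a l == y).

(* The mean of [phi] under the binomial law B(m, 1/2). *)
Fixpoint binomial_mean (m : nat) (phi : nat -> R) : R :=
  if m is m'.+1 then (binomial_mean m' (phi \o succn) + binomial_mean m' phi) / 2%:R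
  else phi 0%N.

Definition f2_within (O : {set 'I_n}) (b : 'I_n -> action) : 'I_n -> action -> R :=
  fun j => if j \in O then f2 R [::] : action -> R else dirac R (b j).

Lemma sum_f2_within_load m (O : {set 'I_n}) (b : 'I_n -> action) (phi : nat -> R) :
  #|O| = m ->
  \sum_(a : aprofile n) (\prod_j f2_within O b j (a j)) * phi (load O a chan1) =
  binomial_mean m phi.
Proof.
elim: m O b phi => [|m IH] O b phi cardO.
  rewrite (cards0_eq cardO) /= -(sum_prod_dirac b (fun=> phi 0%N)).
  apply: eq_bigr => a _; rewrite /load big_set0; congr (_ * _).
  by apply: eq_bigr => j _; rewrite /f2_within inE.
have [l lO] : exists l, l \in O by apply/set0Pn; rewrite -card_gt0 cardO.
have cardOl : #|O :\ l| = m by move: cardO; rewrite (cardsD1 l) lO => -[].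
pose b' y j := if j == l then y else b j.
have fix_l y : \sum_(a : aprofile n)
      (\prod_j set_factor (f2_within O b) l y j (a j)) * phi (load O a chan1)
    = binomial_mean m (fun k => phi (k + (y == chan1))%N).
  rewrite -(IH (O :\ l) (b' y) _ cardOl); apply: eq_bigr => a _.
  have -> : \prod_j set_factor (f2_within O b) l y j (a j) =
            \prod_j f2_within (O :\ l) (b' y) j (a j).
    by apply: eq_bigr => j _; rewrite /set_factor /f2_within /b' in_setD1; case: eqP.
  have [aly | /negbTE alNy] := eqVneq (a l) y.
    by rewrite /load (big_setD1 l lO) /= aly addnC.
  by rewrite (bigD1 l) //= /f2_within in_setD1 eqxx /= /dirac /b' eqxx alNy !mul0r.
rewrite (sum_prod_factor _ l); under eq_bigr do rewrite fix_l /f2_within lO.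
rewrite sum_action !ffunE /= mul0r add0r.
have -> : (fun k => phi (k + 1)%N) = phi \o succn by apply/funext => k; rewrite addn1.
have -> : (fun k => phi (k + 0)%N) = phi by apply/funext => k; rewrite addn0.
by rewrite mulrDl !(mulrC _ 2^-1).
Qed.

End Binomial.

Section Value.
Variable R : realType.

Definition value (k : nat) : R := if k == 1%N then 1 else (2 ^ k)%:R / k%:R.

(* The [value] of the pending set after a slot in which the tagged player, one of [k]
   pending players, plays [x] while [n1] (resp. [n2]) of the others transmit on
   channel 1 (resp. 2); it is 0 when the tagged player succeeds. *)
Definition next_value (k : nat) (x : action) (n1 n2 : nat) : R :=
  if (x != ord0) && ((if x == chan1 then n1 else n2) == 0%N) then 0
  else value (k - ((x != chan1) && (n1 == 1%N)) - ((x != chan2) && (n2 == 1%N))).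

Definition pending_value n (i : 'I_n) (P : {set 'I_n}) : R := (i \in P)%:R * value #|P|.

Lemma value_ge0 k : 0 <= value k.
Proof. by rewrite /value; case: eqP => // _; rewrite divr_ge0. Qed.

Lemma pending_value_ge0 n (i : 'I_n) P : 0 <= pending_value i P.
Proof. by rewrite mulr_ge0 ?value_ge0. Qed.

Lemma value_le4 k : (k <= 4)%N -> value k <= 4%:R.
Proof. by case: k => [|[|[|[|[|?]]]]] // _; rewrite /value /= ?invr0 ?mulr0; lra. Qed.

Lemma value_bellman_mean m x : (m <= 3)%N ->
  value m.+1 - 1 <= binomial_mean m (fun k => next_value m.+1 x k (m - k)).
Proof.
case: x => [[|[|[|?]]] hx] //; case: m => [|[|[|[|?]]]] //= _;
  rewrite /next_value /value /= ?subSS ?subn0 ?subn1 /=; lra.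
Qed.

End Value.

Section Slot.
Variables (n : nat) (P : {set 'I_n}) (i : 'I_n) (x : action) (a : aprofile n).
Hypotheses (iP : i \in P) (ai : a i = x).
Hypothesis others_transmit : forall l, l \in P :\ i -> a l != ord0.

Lemma load_chan1_chan2 : (load (P :\ i) a chan1 + load (P :\ i) a chan2 = #|P :\ i|)%N.
Proof.
rewrite /load -big_split /= -sum1_card; apply: eq_bigr => l lO.
by case: (transmitP (others_transmit lO)) => ->.
Qed.

Lemma succeeds_self : succeeds P a i = (x != ord0) && (load (P :\ i) a x == 0%N).
Proof.
rewrite /succeeds iP ai /= /load sum_nat_eq0; congr andb.
by apply: eq_forallb => l; rewrite in_setD1 eqb0; case: (l \in P); case: (l == i).
Qed.

Lemma succeeds_other l : l \in P :\ i ->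
  succeeds P a l = (x != a l) && (load (P :\ i) a (a l) == 1%N).
Proof.
move=> lO; have /andP[li lP] : (l != i) && (l \in P) by rewrite -in_setD1.
rewrite /succeeds lP others_transmit //= /load (big_setD1 l lO) /= eqxx add1n eqSS.
rewrite sum_nat_eq0; apply/idP/andP => [/forall_inP H | [xal /forall_inP H]].
  split; first by move: (H i iP); rewrite ai eq_sym li.
  apply/forall_inP => l' /[!in_setD1] /and3P[l'l l'i l'P].
  by rewrite eqb0; apply: (implyP (H l' l'P)).
apply/forall_inP => l' l'P; apply/implyP => l'l.
have [->|l'i] := eqVneq l' i; first by rewrite ai.
by rewrite -eqb0; apply: H; rewrite !in_setD1 l'l l'i l'P.
Qed.

Lemma card_successes : ~~ succeeds P a i ->
  #|P :&: [set j | succeeds P a j]| =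
  ((x != chan1) && (load (P :\ i) a chan1 == 1%N) +
   (x != chan2) && (load (P :\ i) a chan2 == 1%N))%N.
Proof.
move=> iNs.
have -> : #|P :&: [set j | succeeds P a j]| = (\sum_(j in P) succeeds P a j)%N.
  rewrite -sum1_card big_mkcond [RHS]big_mkcond; apply: eq_bigr => j _.
  by rewrite !inE; case: (j \in P); case: (succeeds P a j).
rewrite (big_setD1 i iP) /= (negbTE iNs) add0n.
rewrite (eq_bigr (fun l => (a l == chan1) * ((x != chan1) && (load (P :\ i) a chan1 == 1%N))
                 + (a l == chan2) * ((x != chan2) && (load (P :\ i) a chan2 == 1%N)))%N).
  rewrite big_split /= -!big_distrl /= -/(load _ _ chan1) -/(load _ _ chan2).
  have mul_eq1 m (b : bool) : (m * (b && (m == 1%N)))%N = b && (m == 1%N).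
    by case: b; case: eqP => [->|]; rewrite ?muln0.
  by rewrite !mul_eq1.
move=> l lO; rewrite succeeds_other //.
by case: (transmitP (others_transmit lO)) => ->; rewrite ?mul1n ?mul0n ?addn0.
Qed.

Lemma next_valueE (R : realType) :
  pending_value R i (P :\: [set j | succeeds P a j]) =
  next_value R #|P| x (load (P :\ i) a chan1) (load (P :\ i) a chan2).
Proof.
rewrite /pending_value /next_value !inE iP succeeds_self /=.
have card_pending : ~~ succeeds P a i ->
    #|P :\: [set j | succeeds P a j]| =
    (#|P| - ((x != chan1) && (load (P :\ i) a chan1 == 1%N))
          - ((x != chan2) && (load (P :\ i) a chan2 == 1%N)))%N.
  by move=> iNs; rewrite cardsD -subnDA card_successes.
have [x0|xN0] /= := eqVneq x ord0.
  by rewrite mul1r card_pending // succeeds_self x0.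
have -> : (if x == chan1 then load (P :\ i) a chan1 else load (P :\ i) a chan2) =
          load (P :\ i) a x by case/transmitP: xN0 => ->.
have [_|lN0] /= := eqVneq (load (P :\ i) a x) 0%N; first by rewrite mul0r.
by rewrite mul1r card_pending // succeeds_self xN0 (negbTE lN0).
Qed.

End Slot.

Section Bellman.
Variables (R : realType) (n : nat) (F : 'I_n -> protocol R) (i : 'I_n).
Hypotheses (Fi_prot : is_protocol (F i)) (F_others : forall j, j != i -> F j = f2 R).

Definition solo (x : action) : 'I_n -> action := fun j => if j == i then x else ord0.

Lemma f2_within_solo_support (P : {set 'I_n}) x (a : aprofile n) :
  \prod_j f2_within R (P :\ i) (solo x) j (a j) != 0 ->
  a i = x /\ forall l, l \in P :\ i -> a l != ord0.
Proof.
move=> /prodf_neq0 nz; split=> [|l lO].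
  by move: (nz i isT); rewrite /f2_within /solo !inE eqxx /dirac pnatr_eq0 eqb0 negbK => /eqP.
by move: (nz l isT); rewrite /f2_within lO ffunE; case: (a l == ord0); rewrite ?eqxx.
Qed.

Lemma value_bellman_solo (P : {set 'I_n}) x : i \in P -> (#|P| <= 4)%N ->
  value R #|P| - 1 <= \sum_(a : aprofile n) (\prod_j f2_within R (P :\ i) (solo x) j (a j)) *
    pending_value R i (P :\: [set j | succeeds P a j]).
Proof.
move=> iP cardP4; have cardP : #|P| = #|P :\ i|.+1 by rewrite (cardsD1 i P) iP.
rewrite (eq_bigr (fun a : aprofile n => (\prod_j f2_within R (P :\ i) (solo x) j (a j)) *
    next_value R #|P| x (load (P :\ i) a chan1) (#|P :\ i| - load (P :\ i) a chan1))).
  rewrite (sum_f2_within_load _ (fun k => next_value R #|P| x k (#|P :\ i| - k)) erefl).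
  by rewrite cardP; apply: value_bellman_mean; rewrite -ltnS -cardP.
move=> a _; have [->|nz] := eqVneq (\prod_j f2_within R (P :\ i) (solo x) j (a j)) 0.
  by rewrite !mul0r.
have [ai others_transmit] := f2_within_solo_support nz.
by rewrite (next_valueE iP ai others_transmit) -(load_chan1_chan2 others_transmit) addKn.
Qed.

Lemma value_bellman (st : gstate n) : i \in st.1 -> (#|st.1| <= 4)%N ->
  value R #|st.1| - 1 <=
  \sum_(a : aprofile n) weight F st a * pending_value R i (step st a).1.
Proof.
case: st => P H /= iP cardP4.
pose w j := if j \in P then F j (H j) : action -> R else dirac R ord0.
have set_w x : set_factor w i x = f2_within R (P :\ i) (solo x).
  apply/funext => j; rewrite /set_factor /f2_within /solo /w in_setD1.
  by have [//|ji] := eqVneq j i; case: (j \in P); rewrite ?F_others.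
rewrite (eq_bigr (fun a : aprofile n =>
  (\prod_j w j (a j)) * pending_value R i (P :\: [set j | succeeds P a j]))).
  rewrite (sum_prod_factor _ i); under eq_bigr do rewrite set_w.
  have [F_ge0 F_sum1] := Fi_prot (H i).
  apply: (@le_trans _ _ (\sum_x F i (H i) x * (value R #|P| - 1))).
    by rewrite -big_distrl /= F_sum1 mul1r.
  apply: ler_sum => x _; rewrite /w iP.
  by apply: ler_wpM2l; [exact: F_ge0 | exact: value_bellman_solo].
by move=> a _; congr (_ * _); apply: eq_bigr => j _; rewrite /w; case: (j \in P).
Qed.

End Bellman.

Section TupleSums.
Variables (V : nmodType) (A : finType).

Lemma sum_tuple0 (G : seq A -> V) : \sum_(u : 0.-tuple A) G u = G [::].
Proof. by rewrite (big_pred1 [tuple]) // => u; apply/esym/eqP; apply: tuple0. Qed.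

Lemma sum_tuple_cons T (G : seq A -> V) :
  \sum_(u : T.+1.-tuple A) G u = \sum_(a : A) \sum_(t : T.-tuple A) G (a :: t).
Proof.
rewrite pair_big /= (reindex (fun p : A * T.-tuple A => cons_tuple p.1 p.2)) /=.
  by apply: eq_bigr => -[a t].
exists (fun u : T.+1.-tuple A => (thead u, behead_tuple u)) => [[a t] _ | u _] /=.
  by congr (_, _); apply: val_inj.
by rewrite [RHS]tuple_eta.
Qed.

Lemma sum_tuple_rcons T (G : seq A -> V) :
  \sum_(u : T.+1.-tuple A) G u = \sum_(t : T.-tuple A) \sum_(a : A) G (rcons t a).
Proof.
elim: T G => [|T IH] G.
  rewrite sum_tuple_cons (sum_tuple0 (fun s => \sum_(a : A) G (rcons s a))).
  by apply: eq_bigr => a _; rewrite (sum_tuple0 (fun s => G (a :: s))).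
rewrite sum_tuple_cons (sum_tuple_cons _ (fun s => \sum_(a : A) G (rcons s a))).
by apply: eq_bigr => b _; rewrite (IH (fun s => G (b :: s))).
Qed.

End TupleSums.

Section Runs.
Variables (R : realType) (n : nat) (F : 'I_n -> protocol R).

Lemma run_rcons st w tr a :
  run F st w (rcons tr a) =
  (step (run F st w tr).1 a, (run F st w tr).2 * weight F (run F st w tr).1 a).
Proof. by elim: tr st w => [|b tr IH] st w //=. Qed.

Lemma pending_step (st : gstate n) a i :
  (i \in (step st a).1)%:R + (succeeds st.1 a i)%:R = (i \in st.1)%:R :> R.
Proof.
rewrite /step /= !inE; case s_i: (succeeds st.1 a i) => /=; last by rewrite addr0.
by case/and3P: s_i => ->; rewrite add0r.
Qed.

Hypothesis F_prot : forall j, is_protocol (F j).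

Lemma weight_ge0 st a : 0 <= weight F st a.
Proof.
apply: prodr_ge0 => j _.
by case: (j \in st.1); [case: (F_prot j (st.2 j)) | rewrite ler0n].
Qed.

Lemma sum_weight st : \sum_(a : aprofile n) weight F st a = 1.
Proof.
rewrite /weight -(bigA_distr_bigA (fun j y =>
  if j \in st.1 then F j (st.2 j) y else (y == ord0)%:R)) /=.
apply: big1 => j _; case: (j \in st.1); first by case: (F_prot j (st.2 j)).
by rewrite sum_action /= !addr0.
Qed.

Lemma run_ge0 st w tr : 0 <= w -> 0 <= (run F st w tr).2.
Proof.
by elim: tr st w => [|a tr IH] st w //= w_ge0; apply: IH; rewrite mulr_ge0 ?weight_ge0.
Qed.

Lemma plat_ge0 i t : 0 <= plat F i t.
Proof.
apply: sumr_ge0 => u _; apply: sumr_ge0 => a _ /=.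
by rewrite !mulr_ge0 ?weight_ge0 ?run_ge0.
Qed.

Definition expect_at (T : nat) (f : gstate n -> R) : R :=
  \sum_(u : T.-tuple (aprofile n))
    (run F (init_state n) 1 u).2 * f (run F (init_state n) 1 u).1.

Lemma expect_at0 f : expect_at 0 f = f (init_state n).
Proof.
rewrite /expect_at (sum_tuple0 (fun s =>
  (run F (init_state n) 1 s).2 * f (run F (init_state n) 1 s).1)).
by rewrite mul1r.
Qed.

Lemma expect_at_succ T f :
  expect_at T.+1 f = expect_at T (fun st => \sum_(a : aprofile n) weight F st a * f (step st a)).
Proof.
rewrite /expect_at (sum_tuple_rcons _ (fun s =>
  (run F (init_state n) 1 s).2 * f (run F (init_state n) 1 s).1)).
apply: eq_bigr => u _; rewrite big_distrr; apply: eq_bigr => a _.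
by rewrite run_rcons /= mulrA.
Qed.

Lemma plat_expect i T : plat F i T.+1 =
  expect_at T (fun st => \sum_(a : aprofile n) weight F st a * (succeeds st.1 a i)%:R).
Proof.
by apply: eq_bigr => u _; rewrite big_distrr; apply: eq_bigr => a _; rewrite /= mulrA.
Qed.

Lemma expect_atD T f g :
  expect_at T (fun st => f st + g st) = expect_at T f + expect_at T g.
Proof. by rewrite /expect_at -big_split; apply: eq_bigr => u _; rewrite mulrDr. Qed.

Lemma expect_atZ T c f : expect_at T (fun st => c * f st) = c * expect_at T f.
Proof. by rewrite /expect_at big_distrr; apply: eq_bigr => u _; rewrite mulrCA. Qed.

Lemma ler_expect_at T f g : (forall st, f st <= g st) -> expect_at T f <= expect_at T g.
Proof. by move=> fg; apply: ler_sum => u _; apply: ler_wpM2l; rewrite ?run_ge0. Qed.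

End Runs.

Section Latency.
Variables (R : realType) (n : nat) (F : 'I_n -> protocol R) (i : 'I_n).
Hypotheses (F_prot : forall j, is_protocol (F j)) (F_others : forall j, j != i -> F j = f2 R).
Hypothesis n_le4 : (n <= 4)%N.

Definition survival (T : nat) : R := expect_at F T (fun st => (i \in st.1)%:R).

Definition potential (T : nat) : R :=
  expect_at F T (fun st => T%:R * (i \in st.1)%:R + pending_value R i st.1).

Lemma survival_succ T : survival T.+1 + plat F i T.+1 = survival T.
Proof.
rewrite /survival expect_at_succ plat_expect -expect_atD; apply: eq_bigr => u _.
rewrite -big_split /=; under eq_bigr do rewrite -mulrDr pending_step.
by rewrite -big_distrl /= sum_weight // mul1r.
Qed.

Lemma survivalE T : survival T = 1 - \sum_(1 <= t < T.+1) plat F i t.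
Proof.
elim: T => [|T IH]; first by rewrite big_geq // subr0 /survival expect_at0 inE.
by rewrite big_nat_recr //= opprD addrA -IH -(survival_succ T) addrK.
Qed.

Lemma next_potential (st : gstate n) (c : R) :
  \sum_(a : aprofile n) weight F st a *
    (c * (i \in (step st a).1)%:R + pending_value R i (step st a).1)
  + c * \sum_(a : aprofile n) weight F st a * (succeeds st.1 a i)%:R =
  c * (i \in st.1)%:R + \sum_(a : aprofile n) weight F st a * pending_value R i (step st a).1.
Proof.
have -> : (i \in st.1)%:R = \sum_(a : aprofile n)
    weight F st a * ((i \in (step st a).1)%:R + (succeeds st.1 a i)%:R).
  under eq_bigr do rewrite pending_step.
  by rewrite -big_distrl /= sum_weight // mul1r.
by rewrite !big_distrr -!big_split /=; apply: eq_bigr => a _; ring.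
Qed.

Lemma potential_step T : potential T <= potential T.+1 + T.+1%:R * plat F i T.+1.
Proof.
rewrite /potential expect_at_succ plat_expect -expect_atZ -expect_atD.
apply: (ler_expect_at F_prot) => st; rewrite next_potential.
rewrite /pending_value; have [iP|_] := boolP (i \in st.1).
  have := value_bellman (F_prot i) F_others iP (leq_trans (max_card _) _).
  by rewrite card_ord -natr1 !mulr1 mul1r => /(_ n_le4); lra.
rewrite !mulr0 mul0r !add0r; apply: sumr_ge0 => a _.
by rewrite mulr_ge0 ?weight_ge0 ?pending_value_ge0.
Qed.

Lemma value_le_potential T :
  value R n <= potential T + \sum_(1 <= t < T.+1) t%:R * plat F i t.
Proof.
elim: T => [|T IH].
  rewrite big_geq // addr0 /potential expect_at0 /pending_value inE cardsT card_ord.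
  by rewrite mul0r add0r mul1r.
apply: (le_trans IH).
rewrite [X in _ <= _ + X]big_nat_recr //= addrA [X in _ <= X]addrAC lerD2r.
exact: potential_step.
Qed.

Lemma potential_le_survival T : potential T <= (T%:R + 4%:R) * survival T.
Proof.
rewrite /survival -expect_atZ; apply: (ler_expect_at F_prot) => st.
rewrite /pending_value; case: (i \in st.1); rewrite ?mul0r ?mulr0 ?addr0 // !mulr1 mul1r lerD2l.
by apply: value_le4; apply: leq_trans (max_card _) _; rewrite card_ord.
Qed.

End Latency.

Section LatencySeries.
Variables (R : realType) (p : nat -> R).
Hypothesis p_ge0 : forall t, 0 <= p t.

Definition mean_upto (T : nat) : R := \sum_(1 <= t < T.+1) t%:R * p t.
Definition tail_mass (T : nat) : R := 1 - \sum_(1 <= t < T.+1) p t.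

Lemma tail_mass_antitone T U : (T <= U)%N -> tail_mass U <= tail_mass T.
Proof.
move=> TU; rewrite /tail_mass (big_cat_nat _ (n := T.+1)) //=.
have : 0 <= \sum_(T.+1 <= t < U.+1) p t by exact: sumr_ge0.
lra.
Qed.

Lemma mean_upto_growth T U : (T <= U)%N ->
  T.+1%:R * (tail_mass T - tail_mass U) <= mean_upto U - mean_upto T.
Proof.
move=> TU; rewrite /tail_mass /mean_upto.
rewrite !(big_cat_nat (ltn0Sn T) (TU : T.+1 <= U.+1)%N) /=.
set A := \sum_(1 <= t < T.+1) p t.
have -> : 1 - A - (1 - (A + \sum_(T.+1 <= t < U.+1) p t)) = \sum_(T.+1 <= t < U.+1) p t.
  by ring.
rewrite addrC addrK big_distrr /= !big_nat; apply: ler_sum => t /andP[Tt _].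
by rewrite ler_wpM2r // ler_nat.
Qed.

Lemma mean_upto_le_series U : ((mean_upto U)%:E <= \sum_(1 <= t <oo) (t%:R * p t)%:E)%E.
Proof. by rewrite -sumEFin; apply: nneseries_lim_ge => t _; rewrite lee_fin mulr_ge0. Qed.

Lemma tail_mass_small : (1 <= \sum_(1 <= t <oo) (p t)%:E)%E ->
  forall d, 0 < d -> exists U, tail_mass U <= d.
Proof.
move=> mass1 d d_gt0; apply: contrapT => /forallNP large.
have : (\sum_(1 <= t <oo) (p t)%:E <= (1 - d)%:E)%E.
  apply: (lime_le (is_cvg_nneseries _)) => [t _ _|]; first by rewrite lee_fin.
  apply: nearW => -[|U].
    by move/negP: (large 0%N); rewrite -ltNge /tail_mass !big_geq // lee_fin; lra.
  by move/negP: (large U); rewrite -ltNge /tail_mass sumEFin lee_fin; lra.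
by move/(le_trans mass1); rewrite lee_fin; lra.
Qed.

Lemma series_ge_of_tail_bound (c K : R) : 1 <= K ->
  (forall T, c <= mean_upto T + (T%:R + K) * tail_mass T) ->
  (c%:E <= \sum_(1 <= t <oo) (t%:R * p t)%:E +
     (if (\sum_(1 <= t <oo) (p t)%:E < 1)%E then +oo else 0))%E.
Proof.
move=> K_ge1 bound; set mean := (\sum_(1 <= t <oo) (t%:R * p t)%:E)%E.
have mean_ge0 : (0 <= mean)%E by apply: nneseries_ge0 => t _ _; rewrite lee_fin mulr_ge0.
case: ifPn => [_|]; first by rewrite addey ?leey // gt_eqF // (lt_le_trans _ mean_ge0) ?ltNye.
rewrite -leNgt adde0 => mass1; apply/lee_addgt0Pr => e e_gt0.
have K_gt0 : 0 < K by exact: lt_le_trans ltr01 K_ge1.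
have [T small_T] := tail_mass_small mass1 (divr_gt0 e_gt0 (mulr_gt0 (ltr0Sn R 1) K_gt0)).
have [U0 small_U0] := tail_mass_small mass1 (divr_gt0 e_gt0 (mulr_gt0 (ltr0Sn R 1) (ltr0Sn R T))).
pose U := maxn T U0.
apply: le_trans (leeD2r _ (mean_upto_le_series U)); rewrite -EFinD lee_fin.
have growth := mean_upto_growth (leq_maxl T U0).
have small_U : T.+1%:R * tail_mass U <= e / 2%:R.
  have -> : e / 2%:R = T.+1%:R * (e / (2%:R * T.+1%:R)).
    by field; rewrite addrC natr1 pnatr_eq0.
  apply: ler_wpM2l => //.
  exact: le_trans (tail_mass_antitone (leq_maxr T U0)) small_U0.
have small_T_K : (K - 1) * tail_mass T <= e / 2%:R.
  have -> : e / 2%:R = (K - 1) * (e / (2%:R * K)) + e / (2%:R * K) by field; rewrite gt_eqF.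
  have : 0 < e / (2%:R * K) by rewrite divr_gt0 // mulr_gt0.
  have : (K - 1) * tail_mass T <= (K - 1) * (e / (2%:R * K)) by rewrite ler_wpM2l ?subr_ge0.
  lra.
move: (bound T) growth small_U small_T_K; rewrite -natr1.
rewrite !mulrDl !mulrBr ?mulrBl !mul1r; lra.
Qed.

End LatencySeries.

Theorem lemma5 (R : realType) (n : nat) (i : 'I_n) (r : protocol R) :
  (2 <= n <= 4)%N -> is_protocol r -> ~ in_G i r ->
  (((2 ^ n)%:R / n%:R : R)%:E <=
     exp_latency (fun j : 'I_n => if j == i then r else f2 R) i)%E.
Proof.
move=> /andP[n_ge2 n_le4] r_prot _.
set F := fun j : 'I_n => if j == i then r else f2 R.
have F_prot j : is_protocol (F j) by rewrite /F; case: eqP => // _; exact: is_protocol_f2.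
have F_others j : j != i -> F j = f2 R by rewrite /F => /negbTE ->.
have -> : (2 ^ n)%:R / n%:R = value R n by rewrite /value; case: eqP n_ge2 => // ->.
apply: (series_ge_of_tail_bound (plat_ge0 F_prot i) (K := 4%:R)); first by rewrite ler1n.
move=> T; apply: le_trans (value_le_potential F_prot F_others n_le4 T) _.
by rewrite addrC lerD2l /tail_mass -survivalE //; apply: potential_le_survival.
Qed.
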